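(* For any two finite sets $A_1$ and $A_2$ of lines in $\mathbb{R}^2$, there exists a line $\ell$, bounding closed halfplanes $\ell^+$ and $\ell^-$, and sets $A_i^\sigma\subseteq A_i$ for $i\in\{1,2\}$ and $\sigma\in\{+,-\}$, such that $|A_i^\sigma|\ge |A_i|^{1/2}$ and $V(A_i^\sigma)\subseteq \ell^\sigma$.
   Context: For a finite set $A$ of lines in $\mathbb{R}^2$, $V(A)$ denotes the set of all intersection points of pairs of lines of $A$. *)

From Stdlib Require Import Reals List.
Import ListNotations.
Open Scope R_scope.

Definition point := (R * R)%type.

Definition is_line (L : point -> Prop) : Prop :=
  exists a b c : R, (a <> 0 \/ b <> 0) /\
    forall x y : R, L (x, y) <-> a * x + b * y = c.

Definition line_set (A : list (point -> Prop)) : Prop :=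
  NoDup A /\ Forall is_line A.

Definition V (A : list (point -> Prop)) (p : point) : Prop :=
  exists L1 L2, In L1 A /\ In L2 A /\ L1 <> L2 /\ L1 p /\ L2 p.

Definition halfplane_plus (a b c : R) (p : point) : Prop :=
  a * fst p + b * snd p >= c.
Definition halfplane_minus (a b c : R) (p : point) : Prop :=
  a * fst p + b * snd p <= c.

Definition sub_line_set (A' A : list (point -> Prop)) : Prop :=
  NoDup A' /\ incl A' A.

From Stdlib Require Import Reals Rminmax Lra Lia List Classical ClassicalEpsilon
  FunctionalExtensionality PropExtensionality.
Import ListNotations.
Open Scope R_scope.

(* Fix a unit direction u and a threshold c, and order lines by "L1 crosses L2 beyond c":
   L1 lies below L2 on the line u.p = c but is steeper (in coordinates along u), so that
   they meet in u.p > c.  This is a strict partial order, so by Mirsky's theorem a set A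
   of n lines has a chain or an antichain of at least sqrt n lines; all vertices of the
   chain lie in u.p > c, all vertices of the antichain in u.p <= c.  Consequently, if
   level A u is the least c for which some subset of >= sqrt n lines has all its
   vertices in u.p <= c, then level A u + level A (-u) <= 0 and every c between
   level A u and - level A (-u) works for A in direction u.  The levels depend
   continuously on u, and the intermediate value theorem on the half circle gives a
   direction in which the admissible intervals of A1 and A2 intersect. *)

Definition filterP {T} (P : T -> Prop) (l : list T) : list T :=
  filter (fun x => if excluded_middle_informative (P x) then true else false) l.

Lemma filterP_In {T} (P : T -> Prop) l x : In x (filterP P l) <-> In x l /\ P x.
Proof.
  unfold filterP. rewrite filter_In.
  destruct (excluded_middle_informative (P x)); intuition discriminate.
Qed.

Lemma filterP_NoDup {T} (P : T -> Prop) l : NoDup l -> NoDup (filterP P l).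
Proof. apply NoDup_filter. Qed.

Lemma filterP_length {T} (P : T -> Prop) l :
  (length (filterP P l) + length (filterP (fun x => ~ P x) l))%nat = length l.
Proof.
  rewrite <- (filter_length (fun x => if excluded_middle_informative (P x) then true else false) l).
  unfold filterP. do 2 f_equal. apply filter_ext. intro x.
  destruct (excluded_middle_informative (P x)), (excluded_middle_informative (~ P x));
    tauto || reflexivity.
Qed.

Section Mirsky.
Context {T : Type}.
Variable lt : T -> T -> Prop.
Hypothesis lt_irrefl : forall x, ~ lt x x.
Hypothesis lt_trans : forall x y z, lt x y -> lt y z -> lt x z.

Definition maximal_in (X : list T) (x : T) : Prop := forall y, In y X -> ~ lt x y.
Definition chain (C : list T) : Prop :=
  forall x y, In x C -> In y C -> x <> y -> lt x y \/ lt y x.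
Definition antichain (D : list T) : Prop := forall x y, In x D -> In y D -> ~ lt x y.

Lemma maximal_above X x : In x X -> exists m, In m X /\ (m = x \/ lt x m) /\ maximal_in X m.
Proof.
  revert x; induction X as [|a X IH]; intros x Hx; [destruct Hx|].
  destruct Hx as [->|Hx].
  - destruct (classic (exists y, In y X /\ lt x y)) as [(y & Hy & Hxy)|Hno].
    + destruct (IH y Hy) as (m & Hm & Hym & Hmax).
      assert (Hxm : lt x m) by (destruct Hym as [->|]; eauto).
      exists m. split; [right; exact Hm|split; [right; exact Hxm|]].
      intros z [<-|Hz]; [|auto]. intro Hmx. exact (lt_irrefl x (lt_trans _ _ _ Hxm Hmx)).
    + exists x. split; [left; reflexivity|split; [left; reflexivity|]].
      intros z [<-|Hz]; [apply lt_irrefl|]. intro Hxz. apply Hno. eauto.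
  - destruct (IH x Hx) as (m & Hm & Hxm & Hmax).
    destruct (classic (lt m a)) as [Hma|Hma].
    + exists a. split; [left; reflexivity|split].
      * right. destruct Hxm as [->|]; eauto.
      * intros z [<-|Hz]; [apply lt_irrefl|]. intro Haz. exact (Hmax z Hz (lt_trans _ _ _ Hma Haz)).
    + exists m. split; [right; exact Hm|split; [exact Hxm|]].
      intros z [<-|Hz]; auto.
Qed.

Lemma chain_below_maximal X C : incl C X -> chain C -> C <> [] ->
  (forall z, In z C -> ~ maximal_in X z) ->
  exists m, In m X /\ maximal_in X m /\ forall z, In z C -> lt z m.
Proof.
  intros HCX HC HCne Hnm. destruct C as [|c C]; [congruence|].
  destruct (maximal_above (c :: C) c (or_introl eq_refl)) as (top & Htop & _ & Htopmax).
  destruct (not_all_not_ex _ (fun y => In y X /\ lt top y)) as (y & Hy & Hty).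
  { intro H. apply (Hnm top Htop). intros y Hy Hty. exact (H y (conj Hy Hty)). }
  destruct (maximal_above X y Hy) as (m & Hm & Hym & Hmax).
  assert (Htm : lt top m) by (destruct Hym as [->|]; eauto).
  exists m. split; [exact Hm|split; [exact Hmax|]].
  intros z Hz. destruct (classic (z = top)) as [->|Hzt]; [exact Htm|].
  destruct (HC z top Hz Htop Hzt) as [Hzt'|Htz]; [eauto|].
  destruct (Htopmax z Hz Htz).
Qed.

Lemma chain_cons C m : NoDup C -> chain C -> (forall z, In z C -> lt z m) ->
  NoDup (m :: C) /\ chain (m :: C).
Proof.
  intros HN HC Hm. split.
  - constructor; [|exact HN]. intro H. exact (lt_irrefl m (Hm m H)).
  - intros x y [<-|Hx] [<-|Hy] Hxy; [tauto|right; auto|left; auto|auto].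
Qed.

Definition mirsky_witness X C D : Prop :=
  NoDup C /\ incl C X /\ chain C /\ NoDup D /\ incl D X /\ antichain D /\
  (length X <= length C * length D)%nat.

Lemma mirsky_witness_nil : mirsky_witness [] [] [].
Proof.
  split; [constructor|]. split; [intros ? []|]. split; [intros ? ? []|].
  split; [constructor|]. split; [intros ? []|]. split; [intros ? ? []|]. simpl; lia.
Qed.

(* The maximal elements of X form an antichain; a chain of the remaining elements extends
   by a maximal element above its top. *)
Lemma mirsky_step X m C' D' : NoDup X -> In m X -> maximal_in X m ->
  mirsky_witness (filterP (fun z => ~ maximal_in X z) X) C' D' ->
  exists C D, mirsky_witness X C D.
Proof.
  intros HX Hm Hmax (HNC' & HC'X' & HC' & HND' & HD'X' & HD' & HlenX').
  set (D0 := filterP (maximal_in X) X) in *.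
  set (X' := filterP (fun z => ~ maximal_in X z) X) in *.
  assert (HD0 : antichain D0).
  { intros a b Ha Hb. apply filterP_In in Ha, Hb. apply (proj2 Ha), Hb. }
  assert (HD0X : incl D0 X) by (intros a Ha; apply filterP_In in Ha; tauto).
  assert (HND0 : NoDup D0) by (apply filterP_NoDup, HX).
  assert (HX'X : incl X' X) by (intros a Ha; apply filterP_In in Ha; tauto).
  assert (Hlen : (length D0 + length X')%nat = length X) by apply filterP_length.
  assert (HX'max : forall z, In z X' -> ~ maximal_in X z)
    by (intros z Hz; apply filterP_In in Hz; tauto).
  clearbody D0 X'.
  destruct C' as [|c C'].
  - exists [m], D0. split; [repeat constructor; intros []|].
    split; [intros z [<-|[]]; exact Hm|].
    split; [intros a b [<-|[]] [<-|[]]; tauto|].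
    do 3 (split; [assumption|]). simpl in HlenX' |- *. lia.
  - destruct (chain_below_maximal X (c :: C')) as (m' & Hm' & Hmax' & Hbelow).
    + intros z Hz. apply HX'X, HC'X', Hz.
    + exact HC'.
    + discriminate.
    + intros z Hz. apply HX'max, HC'X', Hz.
    + destruct (chain_cons _ m' HNC' HC' Hbelow) as [HNC HC].
      assert (HCX : incl (m' :: c :: C') X).
      { intros z [<-|Hz]; [exact Hm'|apply HX'X, HC'X', Hz]. }
      assert (HD'X : incl D' X) by (intros z Hz; apply HX'X, HD'X', Hz).
      exists (m' :: c :: C').
      destruct (Nat.le_ge_cases (length D0) (length D')); [exists D'|exists D0];
        repeat split; auto; simpl length in *; nia.
Qed.

Theorem mirsky X : NoDup X -> exists C D, mirsky_witness X C D.
Proof.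
  remember (length X) as n eqn:En. revert X En.
  induction n as [n IH] using Wf_nat.lt_wf_ind. intros X -> HX.
  destruct X as [|x X0]; [exists [], []; exact mirsky_witness_nil|].
  destruct (maximal_above (x :: X0) x (or_introl eq_refl)) as (m & Hm & _ & Hmax).
  set (X' := filterP (fun z => ~ maximal_in (x :: X0) z) (x :: X0)).
  assert (Hshort : (length X' < length (x :: X0))%nat).
  { assert (Hm0 : In m (filterP (maximal_in (x :: X0)) (x :: X0))) by (apply filterP_In; auto).
    rewrite <- (filterP_length (maximal_in (x :: X0)) (x :: X0)). fold X'.
    destruct (filterP (maximal_in (x :: X0)) (x :: X0)); [destruct Hm0|simpl; lia]. }
  destruct (IH _ Hshort X' eq_refl (filterP_NoDup _ _ HX)) as (C' & D' & HW).
  exact (mirsky_step _ m C' D' HX Hm Hmax HW).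
Qed.

End Mirsky.

Definition line_eq (L : point -> Prop) (abk : R * R * R) : Prop :=
  let '(a, b, k) := abk in
  (a <> 0 \/ b <> 0) /\ forall p, L p <-> a * fst p + b * snd p = k.

Definition line_coef (L : point -> Prop) : R * R * R :=
  epsilon (inhabits (0, 0, 0)) (line_eq L).
Definition la L := fst (fst (line_coef L)).
Definition lb L := snd (fst (line_coef L)).
Definition lk L := snd (line_coef L).

Lemma line_coef_spec L : is_line L ->
  (la L <> 0 \/ lb L <> 0) /\ forall p, L p <-> la L * fst p + lb L * snd p = lk L.
Proof.
  intros (a & b & k & Hab & HL).
  assert (Hspec : line_eq L (line_coef L)).
  { unfold line_coef. apply epsilon_spec. exists (a, b, k).
    split; [exact Hab|intros [x y]; apply HL]. }
  unfold la, lb, lk. destruct (line_coef L) as [[a' b'] k']. exact Hspec.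
Qed.

Definition det L1 L2 := la L1 * lb L2 - la L2 * lb L1.

Definition meet L1 L2 : point :=
  ((lk L1 * lb L2 - lk L2 * lb L1) / det L1 L2,
   (la L1 * lk L2 - la L2 * lk L1) / det L1 L2).

Lemma det_diag L : det L L = 0.
Proof. unfold det. ring. Qed.

Lemma meet_on_lines L1 L2 : is_line L1 -> is_line L2 -> det L1 L2 <> 0 ->
  L1 (meet L1 L2) /\ L2 (meet L1 L2).
Proof.
  intros H1 H2 D. destruct (line_coef_spec _ H1) as [_ E1], (line_coef_spec _ H2) as [_ E2].
  split; [apply E1|apply E2]; unfold meet, det in *; simpl; field; exact D.
Qed.

Lemma common_point_meet L1 L2 p : is_line L1 -> is_line L2 -> det L1 L2 <> 0 ->
  L1 p -> L2 p -> p = meet L1 L2.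
Proof.
  intros H1 H2 D P1 P2.
  destruct (line_coef_spec _ H1) as [_ E1], (line_coef_spec _ H2) as [_ E2].
  apply E1 in P1. apply E2 in P2. destruct p as [x y]. simpl in *.
  unfold meet, det in *. f_equal;
    apply (Rmult_eq_reg_r (la L1 * lb L2 - la L2 * lb L1)); auto;
    field_simplify; auto; rewrite <- P1, <- P2; ring.
Qed.

Lemma parallel_kernel a1 b1 a2 b2 dx dy : (a1 <> 0 \/ b1 <> 0) -> a1 * b2 - a2 * b1 = 0 ->
  a1 * dx + b1 * dy = 0 -> a2 * dx + b2 * dy = 0.
Proof.
  intros Hab D H.
  assert (Ea : a1 * (a2 * dx + b2 * dy) = 0).
  { replace (a1 * (a2 * dx + b2 * dy)) with (a2 * (a1 * dx + b1 * dy) + dy * (a1 * b2 - a2 * b1))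
      by ring. rewrite H, D. ring. }
  assert (Eb : b1 * (a2 * dx + b2 * dy) = 0).
  { replace (b1 * (a2 * dx + b2 * dy)) with (b2 * (a1 * dx + b1 * dy) - dx * (a1 * b2 - a2 * b1))
      by ring. rewrite H, D. ring. }
  destruct Hab as [Ha|Hb].
  - destruct (Rmult_integral _ _ Ea); [contradiction|assumption].
  - destruct (Rmult_integral _ _ Eb); [contradiction|assumption].
Qed.

Lemma parallel_lines_eq L1 L2 p : is_line L1 -> is_line L2 -> det L1 L2 = 0 ->
  L1 p -> L2 p -> L1 = L2.
Proof.
  intros H1 H2 D P1 P2.
  destruct (line_coef_spec _ H1) as [N1 E1], (line_coef_spec _ H2) as [N2 E2].
  apply E1 in P1. apply E2 in P2. unfold det in D.
  apply functional_extensionality. intro q. apply propositional_extensionality.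
  rewrite E1, E2. set (dx := fst q - fst p). set (dy := snd q - snd p). split; intro Q.
  - assert (a2 : la L2 * dx + lb L2 * dy = 0)
      by (apply (parallel_kernel (la L1) (lb L1)); auto; unfold dx, dy; lra).
    unfold dx, dy in a2. lra.
  - assert (a1 : la L1 * dx + lb L1 * dy = 0)
      by (apply (parallel_kernel (la L2) (lb L2)); auto; unfold dx, dy; lra).
    unfold dx, dy in a1. lra.
Qed.

Section Frame.
Variables u1 u2 c : R.
Hypothesis unit_u : u1 * u1 + u2 * u2 = 1.

Definition xc (p : point) := u1 * fst p + u2 * snd p.
Definition yc (p : point) := - u2 * fst p + u1 * snd p.
Definition rot_a L := la L * u1 + lb L * u2.
Definition rot_b L := - la L * u2 + lb L * u1.
Definition intercept L := (lk L - rot_a L * c) / rot_b L.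
Definition slope L := - rot_a L / rot_b L.

(* In the coordinates (xc, yc) a non-vertical line is yc = intercept + slope * (xc - c).
   [crosses_after L1 L2]: L1 is below L2 at xc = c but steeper, or L2 is vertical beyond c;
   in both cases the two lines meet in the open halfplane xc > c. *)
Definition crosses_after L1 L2 :=
  (rot_b L1 <> 0 /\ rot_b L2 <> 0 /\ intercept L1 < intercept L2 /\ slope L2 < slope L1) \/
  (rot_b L1 <> 0 /\ rot_b L2 = 0 /\ rot_a L2 <> 0 /\ c < lk L2 / rot_a L2).

Lemma line_in_frame L p : is_line L -> L p -> rot_a L * xc p + rot_b L * yc p = lk L.
Proof.
  intros H P. destruct (line_coef_spec _ H) as [_ E]. apply E in P. rewrite <- P.
  unfold rot_a, rot_b, xc, yc.
  transitivity ((la L * fst p + lb L * snd p) * (u1 * u1 + u2 * u2)); [ring|].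
  rewrite unit_u. ring.
Qed.

Lemma yc_on_line L p : is_line L -> L p -> rot_b L <> 0 ->
  yc p = intercept L + slope L * (xc p - c).
Proof.
  intros H P G. pose proof (line_in_frame L p H P) as E. unfold intercept, slope.
  apply (Rmult_eq_reg_l (rot_b L)); auto. field_simplify; auto. lra.
Qed.

Lemma xc_on_vertical L p : is_line L -> L p -> rot_b L = 0 -> rot_a L <> 0 ->
  xc p = lk L / rot_a L.
Proof.
  intros H P G A. pose proof (line_in_frame L p H P) as E. rewrite G in E.
  rewrite <- E. field. exact A.
Qed.

Lemma det_in_frame L1 L2 : rot_a L1 * rot_b L2 - rot_a L2 * rot_b L1 = det L1 L2.
Proof.
  unfold rot_a, rot_b, det.
  transitivity ((la L1 * lb L2 - la L2 * lb L1) * (u1 * u1 + u2 * u2)); [ring|].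
  rewrite unit_u. ring.
Qed.

Lemma crosses_after_irrefl L : ~ crosses_after L L.
Proof. intros [(_ & _ & H & _)|(H1 & H2 & _)]; [lra|contradiction]. Qed.

Lemma crosses_after_trans L1 L2 L3 :
  crosses_after L1 L2 -> crosses_after L2 L3 -> crosses_after L1 L3.
Proof.
  intros [(A1 & A2 & A3 & A4)|(A1 & A2 & A3 & A4)] [(B1 & B2 & B3 & B4)|(B1 & B2 & B3 & B4)].
  - left. repeat split; auto; lra.
  - right. auto.
  - contradiction.
  - contradiction.
Qed.

Lemma crosses_after_meet L1 L2 p : is_line L1 -> is_line L2 ->
  crosses_after L1 L2 -> L1 p -> L2 p -> c < xc p.
Proof.
  intros H1 H2 [(A1 & A2 & A3 & A4)|(A1 & A2 & A3 & A4)] P1 P2.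
  - pose proof (yc_on_line _ _ H1 P1 A1). pose proof (yc_on_line _ _ H2 P2 A2).
    assert ((slope L1 - slope L2) * (xc p - c) = intercept L2 - intercept L1) by lra.
    destruct (Rle_or_lt (xc p) c); [nra|assumption].
  - rewrite (xc_on_vertical _ _ H2 P2 A2 A3). exact A4.
Qed.

Lemma crosses_after_total L1 L2 p : is_line L1 -> is_line L2 -> det L1 L2 <> 0 ->
  L1 p -> L2 p -> c < xc p -> crosses_after L1 L2 \/ crosses_after L2 L1.
Proof.
  intros H1 H2 D P1 P2 Hc. rewrite <- det_in_frame in D.
  destruct (Req_dec (rot_b L1) 0) as [G1|G1]; destruct (Req_dec (rot_b L2) 0) as [G2|G2].
  - rewrite G1, G2 in D. lra.
  - assert (A1 : rot_a L1 <> 0) by (intro Z; rewrite Z, G1 in D; lra).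
    right. right. rewrite <- (xc_on_vertical _ _ H1 P1 G1 A1). auto.
  - assert (A2 : rot_a L2 <> 0) by (intro Z; rewrite Z, G2 in D; lra).
    left. right. rewrite <- (xc_on_vertical _ _ H2 P2 G2 A2). auto.
  - pose proof (yc_on_line _ _ H1 P1 G1). pose proof (yc_on_line _ _ H2 P2 G2).
    assert (Hm : slope L1 <> slope L2).
    { unfold slope. intro Z. apply D. field_simplify_eq in Z; auto. lra. }
    assert ((slope L1 - slope L2) * (xc p - c) = intercept L2 - intercept L1) by lra.
    destruct (Rtotal_order (slope L1) (slope L2)) as [Hl|[He|Hl]].
    + right. left. repeat split; auto; nra.
    + contradiction.
    + left. left. repeat split; auto; nra.
Qed.

End Frame.

Definition vertices (S : list (point -> Prop)) : list point :=
  flat_map (fun L1 => flat_map (fun L2 =>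
    if Req_dec_T (det L1 L2) 0 then [] else [meet L1 L2]) S) S.

Lemma In_vertices S v : In v (vertices S) <->
  exists L1 L2, In L1 S /\ In L2 S /\ det L1 L2 <> 0 /\ v = meet L1 L2.
Proof.
  unfold vertices. rewrite in_flat_map. split.
  - intros (L1 & H1 & H). rewrite in_flat_map in H. destruct H as (L2 & H2 & H).
    destruct (Req_dec_T (det L1 L2) 0) as [E|E]; [destruct H|].
    destruct H as [<-|[]]. exists L1, L2. auto.
  - intros (L1 & L2 & H1 & H2 & D & ->). exists L1. split; [exact H1|].
    rewrite in_flat_map. exists L2. split; [exact H2|].
    destruct (Req_dec_T (det L1 L2) 0) as [E|E]; [contradiction|left; reflexivity].
Qed.

Lemma V_vertices A S p : line_set A -> incl S A -> V S p -> In p (vertices S).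
Proof.
  intros [_ HF] I (L1 & L2 & I1 & I2 & Ne & P1 & P2). rewrite Forall_forall in HF.
  pose proof (HF _ (I _ I1)) as HL1. pose proof (HF _ (I _ I2)) as HL2.
  assert (D : det L1 L2 <> 0) by (intro D; exact (Ne (parallel_lines_eq _ _ _ HL1 HL2 D P1 P2))).
  apply In_vertices. exists L1, L2. repeat split; auto. apply common_point_meet; auto.
Qed.

Fixpoint sublists {T} (l : list T) : list (list T) :=
  match l with
  | [] => [[]]
  | x :: l' => map (cons x) (sublists l') ++ sublists l'
  end.

Lemma filter_In_sublists {T} (f : T -> bool) l : In (filter f l) (sublists l).
Proof.
  induction l as [|a l IH]; simpl; [left; reflexivity|].
  apply in_or_app. destruct (f a); [left; apply in_map|right]; exact IH.
Qed.

Lemma sublists_sub {T} (l S : list T) : In S (sublists l) -> incl S l /\ (NoDup l -> NoDup S).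
Proof.
  revert S. induction l as [|a l IH]; simpl; intros S HS.
  - destruct HS as [<-|[]]. split; [intros x []|intros; constructor].
  - apply in_app_or in HS. destruct HS as [HS|HS].
    + apply in_map_iff in HS. destruct HS as (S' & <- & HS). destruct (IH _ HS) as [I N].
      split; [intros x [<-|Hx]; simpl; auto|].
      intro HN. inversion HN; subst. constructor; auto.
    + destruct (IH _ HS) as [I N]. split; [intros x Hx; simpl; auto|].
      intro HN. inversion HN; subst. auto.
Qed.

Definition large_sublists {T} (A : list T) : list (list T) :=
  filter (fun S => Nat.leb (length A) (length S * length S)) (sublists A).

Lemma large_sublists_spec {T} (A S : list T) : NoDup A -> In S (large_sublists A) ->
  NoDup S /\ incl S A /\ (length A <= length S * length S)%nat.
Proof.
  intros HN H. unfold large_sublists in H. apply filter_In in H. destruct H as [H L].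
  apply Nat.leb_le in L. destruct (sublists_sub _ _ H). auto.
Qed.

Lemma large_sublists_self {T} (A : list T) : In A (large_sublists A).
Proof.
  unfold large_sublists. apply filter_In. split.
  - pose proof (filter_In_sublists (fun _ => true) A) as H. rewrite filter_true in H. exact H.
  - apply Nat.leb_le. nia.
Qed.

Lemma large_sublists_complete {T} (A S : list T) : NoDup A -> NoDup S -> incl S A ->
  (length A <= length S * length S)%nat ->
  exists S', In S' (large_sublists A) /\ forall x, In x S' <-> In x S.
Proof.
  intros HA HS I L. exists (filterP (fun x => In x S) A).
  assert (E : forall x, In x (filterP (fun x => In x S) A) <-> In x S)
    by (intro x; rewrite filterP_In; intuition).
  split; [|exact E].
  assert (Hlen : length (filterP (fun x => In x S) A) = length S).
  { apply Nat.le_antisymm; apply NoDup_incl_length; auto using filterP_NoDup;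
      intros x Hx; apply E, Hx. }
  unfold large_sublists. apply filter_In. split; [apply filter_In_sublists|].
  apply Nat.leb_le. rewrite Hlen. exact L.
Qed.

Definition large_below (A : list (point -> Prop)) (u1 u2 c : R) : Prop :=
  exists S, In S (large_sublists A) /\
    forall v, In v (vertices S) -> u1 * fst v + u2 * snd v <= c.

Section LargeBelow.
Variables u1 u2 c : R.
Hypothesis unit_u : u1 * u1 + u2 * u2 = 1.
Variable S : list (point -> Prop).
Hypothesis S_lines : forall L, In L S -> is_line L.

Lemma chain_vertices_after : chain (crosses_after u1 u2 c) S ->
  forall v, In v (vertices S) -> c < xc u1 u2 v.
Proof.
  intros HC v Hv. apply In_vertices in Hv. destruct Hv as (L1 & L2 & H1 & H2 & D & ->).
  assert (Ne : L1 <> L2) by (intros ->; exact (D (det_diag L2))).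
  destruct (meet_on_lines L1 L2 (S_lines _ H1) (S_lines _ H2) D) as [P1 P2].
  destruct (HC L1 L2 H1 H2 Ne) as [R|R].
  - exact (crosses_after_meet u1 u2 c unit_u _ _ _ (S_lines _ H1) (S_lines _ H2) R P1 P2).
  - exact (crosses_after_meet u1 u2 c unit_u _ _ _ (S_lines _ H2) (S_lines _ H1) R P2 P1).
Qed.

Lemma antichain_vertices_before : antichain (crosses_after u1 u2 c) S ->
  forall v, In v (vertices S) -> xc u1 u2 v <= c.
Proof.
  intros HD v Hv. apply In_vertices in Hv. destruct Hv as (L1 & L2 & H1 & H2 & D & ->).
  destruct (meet_on_lines L1 L2 (S_lines _ H1) (S_lines _ H2) D) as [P1 P2].
  destruct (Rle_or_lt (xc u1 u2 (meet L1 L2)) c) as [Hle|Hlt]; [exact Hle|].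
  destruct (crosses_after_total u1 u2 c unit_u _ _ _ (S_lines _ H1) (S_lines _ H2) D P1 P2 Hlt)
    as [R|R]; [destruct (HD _ _ H1 H2 R)|destruct (HD _ _ H2 H1 R)].
Qed.

End LargeBelow.

Lemma large_below_same_points A S S' u1 u2 c : In S' (large_sublists A) ->
  (forall x, In x S' <-> In x S) ->
  (forall v, In v (vertices S) -> u1 * fst v + u2 * snd v <= c) -> large_below A u1 u2 c.
Proof.
  intros HS' E H. exists S'. split; [exact HS'|]. intros v Hv. apply H.
  apply In_vertices in Hv. destruct Hv as (L1 & L2 & H1 & H2 & D & ->).
  apply In_vertices. exists L1, L2. rewrite <- !E. auto.
Qed.

Lemma large_below_either A u1 u2 c : line_set A -> u1 * u1 + u2 * u2 = 1 ->
  large_below A u1 u2 c \/ large_below A (- u1) (- u2) (- c).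
Proof.
  intros [HN HF] Hu. rewrite Forall_forall in HF.
  destruct (mirsky (crosses_after u1 u2 c) (crosses_after_irrefl u1 u2 c)
              (crosses_after_trans u1 u2 c) A HN)
    as (C & D & NC & IC & HC & ND & ID & HD & Hlen).
  destruct (Compare_dec.le_lt_dec (length A) (length C * length C)) as [LC|LC].
  - right. destruct (large_sublists_complete A C HN NC IC LC) as (S & HS & E).
    apply (large_below_same_points A C S); auto. intros v Hv.
    pose proof (chain_vertices_after u1 u2 c Hu C (fun L H => HF L (IC L H)) HC v Hv).
    unfold xc in *. lra.
  - left. assert (LD : (length A <= length D * length D)%nat) by nia.
    destruct (large_sublists_complete A D HN ND ID LD) as (S & HS & E).
    apply (large_below_same_points A D S); auto.
    exact (antichain_vertices_before u1 u2 c Hu D (fun L H => HF L (ID L H)) HD).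
Qed.

(* Both are [0] on the empty list, whence the hypothesis [nondegenerate] below. *)
Definition maxl (l : list R) : R := match l with [] => 0 | x :: l' => fold_right Rmax x l' end.
Definition minl (l : list R) : R := match l with [] => 0 | x :: l' => fold_right Rmin x l' end.

Lemma maxl_le l c : l <> [] -> (maxl l <= c <-> forall x, In x l -> x <= c).
Proof.
  destruct l as [|x l]; [congruence|intros _]. simpl.
  induction l as [|y l IH]; simpl.
  - split; [intros H z [<-|[]]; exact H|intro H; apply H; left; reflexivity].
  - rewrite R.max_lub_iff, IH. split.
    + intros [Hy H] z [<-|[<-|Hz]]; auto.
    + intro H. split; [apply H; right; left|intros z [<-|Hz]; apply H]; auto.
Qed.

Lemma minl_le l c : l <> [] -> (minl l <= c <-> exists x, In x l /\ x <= c).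
Proof.
  destruct l as [|x l]; [congruence|intros _]. simpl.
  induction l as [|y l IH]; simpl.
  - split; [intro H; exists x; auto|intros (z & [<-|[]] & H); exact H].
  - rewrite R.min_le_iff, IH. split.
    + intros [Hy|(z & [<-|Hz] & H)]; eauto.
    + intros (z & [<-|[<-|Hz]] & H); eauto.
Qed.

Lemma continuity_Rmax f g : continuity f -> continuity g ->
  continuity (fun t => Rmax (f t) (g t)).
Proof.
  intros Hf Hg.
  replace (fun t => Rmax (f t) (g t)) with (fun t => (f t + g t + Rabs (f t - g t)) / 2).
  - apply continuity_mult; [|apply continuity_const; intros ? ?; reflexivity].
    apply continuity_plus; [apply continuity_plus; auto|].
    apply (continuity_comp (fun t => f t - g t) Rabs); [apply continuity_minus; auto|].
    apply Rcontinuity_abs.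
  - apply functional_extensionality. intro t.
    unfold Rmax, Rabs. destruct Rle_dec, Rcase_abs; lra.
Qed.

Lemma continuity_Rmin f g : continuity f -> continuity g ->
  continuity (fun t => Rmin (f t) (g t)).
Proof.
  intros Hf Hg.
  replace (fun t => Rmin (f t) (g t)) with (fun t => - Rmax (- f t) (- g t)).
  - apply continuity_opp, continuity_Rmax; apply continuity_opp; auto.
  - apply functional_extensionality. intro t. rewrite Ropp_Rmax, !Ropp_involutive. reflexivity.
Qed.

Lemma continuity_maxl {E} (F : E -> R -> R) (l : list E) :
  (forall e, In e l -> continuity (F e)) -> continuity (fun t => maxl (map (fun e => F e t) l)).
Proof.
  destruct l as [|e l]; simpl; intros H; [apply continuity_const; intros ? ?; reflexivity|].
  induction l as [|e' l IH]; simpl; [apply H; auto|].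
  apply continuity_Rmax; [apply H; simpl; auto|].
  apply IH. intros e0 [<-|He]; apply H; simpl; auto.
Qed.

Lemma continuity_minl {E} (F : E -> R -> R) (l : list E) :
  (forall e, In e l -> continuity (F e)) -> continuity (fun t => minl (map (fun e => F e t) l)).
Proof.
  destruct l as [|e l]; simpl; intros H; [apply continuity_const; intros ? ?; reflexivity|].
  induction l as [|e' l IH]; simpl; [apply H; auto|].
  apply continuity_Rmin; [apply H; simpl; auto|].
  apply IH. intros e0 [<-|He]; apply H; simpl; auto.
Qed.

Definition level (A : list (point -> Prop)) (u1 u2 : R) : R :=
  minl (map (fun S => maxl (map (fun v => u1 * fst v + u2 * snd v) (vertices S)))
            (large_sublists A)).

Definition nondegenerate (A : list (point -> Prop)) : Prop :=
  forall S, In S (large_sublists A) -> vertices S <> [].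

Lemma large_below_iff_level A u1 u2 c : nondegenerate A ->
  large_below A u1 u2 c <-> level A u1 u2 <= c.
Proof.
  intros ND. unfold level, large_below. rewrite minl_le.
  2:{ intro E. apply map_eq_nil in E. pose proof (large_sublists_self A) as H.
      rewrite E in H. destruct H. }
  split.
  - intros (S & HS & H). eexists.
    split; [apply in_map_iff; exists S; split; [reflexivity|exact HS]|].
    apply maxl_le; [intro E; apply map_eq_nil in E; exact (ND S HS E)|].
    intros x Hx. apply in_map_iff in Hx. destruct Hx as (v & <- & Hv). auto.
  - intros (x & Hx & Hc). apply in_map_iff in Hx. destruct Hx as (S & <- & HS).
    exists S. split; [exact HS|]. intros v Hv. rewrite maxl_le in Hc.
    + apply Hc, in_map_iff. exists v. auto.
    + intro E. apply map_eq_nil in E. exact (ND S HS E).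
Qed.

Lemma level_antipodal A u1 u2 : line_set A -> nondegenerate A -> u1 * u1 + u2 * u2 = 1 ->
  level A u1 u2 + level A (- u1) (- u2) <= 0.
Proof.
  intros HA ND Hu. apply Rnot_lt_le. intro H.
  destruct (large_below_either A u1 u2 ((level A u1 u2 - level A (- u1) (- u2)) / 2) HA Hu)
    as [P|P]; apply large_below_iff_level in P; auto; lra.
Qed.

Lemma continuity_level A f g : continuity f -> continuity g ->
  continuity (fun t => level A (f t) (g t)).
Proof.
  intros Hf Hg. unfold level.
  apply (continuity_minl (fun S t => maxl (map (fun v => f t * fst v + g t * snd v) (vertices S)))).
  intros S _. apply (continuity_maxl (fun v t => f t * fst v + g t * snd v)).
  intros v _. apply continuity_plus; apply continuity_mult; auto;
    apply continuity_const; intros ? ?; reflexivity.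
Qed.

Definition splits A u1 u2 c := large_below A u1 u2 c /\ large_below A (- u1) (- u2) (- c).

Lemma degenerate_splits A u1 u2 c : ~ nondegenerate A -> splits A u1 u2 c.
Proof.
  intro H. apply not_all_ex_not in H. destruct H as [S H].
  apply imply_to_and in H. destruct H as [HS H]. apply NNPP in H.
  split; exists S; split; auto; intros v; rewrite H; intros [].
Qed.

Lemma splits_between_levels A u1 u2 c : nondegenerate A ->
  level A u1 u2 <= c -> c <= - level A (- u1) (- u2) -> splits A u1 u2 c.
Proof. intros ND H1 H2. split; apply large_below_iff_level; auto; lra. Qed.

Lemma exists_split A : line_set A -> exists c, splits A 1 0 c.
Proof.
  intro HA. destruct (classic (nondegenerate A)) as [ND|ND].
  - exists (level A 1 0). apply splits_between_levels; [exact ND|lra|].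
    pose proof (level_antipodal A 1 0 HA ND ltac:(lra)). lra.
  - exists 0. apply degenerate_splits, ND.
Qed.

Lemma common_split A1 A2 : line_set A1 -> line_set A2 ->
  exists u1 u2 c, u1 * u1 + u2 * u2 = 1 /\ splits A1 u1 u2 c /\ splits A2 u1 u2 c.
Proof.
  intros H1 H2.
  destruct (classic (nondegenerate A1)) as [N1|N1];
    [destruct (classic (nondegenerate A2)) as [N2|N2]|].
  - (* [gap (t + PI) = - gap t], so [gap] vanishes somewhere on [0, PI]. *)
    set (gap t := level A1 (cos t) (sin t) + level A2 (- cos t) (- sin t)
                  - level A2 (cos t) (sin t) - level A1 (- cos t) (- sin t)).
    assert (Hgap : continuity gap).
    { unfold gap. repeat apply continuity_minus; try apply continuity_plus;
        apply continuity_level; try apply continuity_opp;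
        first [apply continuity_cos|apply continuity_sin]. }
    assert (Hsign : gap 0 * gap PI <= 0).
    { unfold gap. rewrite cos_PI, sin_PI, cos_0, sin_0, Ropp_0.
      replace (- (1)) with (-1) by ring. replace (- (-1)) with 1 by ring.
      pose proof (Rle_0_sqr (level A1 1 0 + level A2 (-1) 0 - level A2 1 0 - level A1 (-1) 0)).
      unfold Rsqr in *. lra. }
    destruct (IVT_cor gap 0 PI Hgap (Rlt_le _ _ PI_RGT_0) Hsign) as (t & _ & Ht).
    assert (Hu : cos t * cos t + sin t * sin t = 1).
    { pose proof (sin2_cos2 t). unfold Rsqr in *. lra. }
    pose proof (level_antipodal A1 _ _ H1 N1 Hu). pose proof (level_antipodal A2 _ _ H2 N2 Hu).
    unfold gap in Ht; cbv beta in Ht.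
    exists (cos t), (sin t), (Rmax (level A1 (cos t) (sin t)) (level A2 (cos t) (sin t))).
    split; [exact Hu|split; apply splits_between_levels; auto;
      solve [apply R.le_max_l|apply R.le_max_r|apply Rmax_lub; lra]].
  - destruct (exists_split A1 H1) as [c Hc].
    exists 1, 0, c. split; [lra|split; [exact Hc|apply degenerate_splits, N2]].
  - destruct (exists_split A2 H2) as [c Hc].
    exists 1, 0, c. split; [lra|split; [apply degenerate_splits, N1|exact Hc]].
Qed.

Lemma sqrt_le_INR n m : (n <= m * m)%nat -> INR m >= sqrt (INR n).
Proof.
  intro H. apply Rle_ge. rewrite <- (sqrt_square (INR m)) by apply pos_INR.
  apply sqrt_le_1_alt. rewrite <- mult_INR. apply le_INR, H.
Qed.

Lemma large_below_sublist A u1 u2 c : line_set A -> large_below A u1 u2 c ->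
  exists S, sub_line_set S A /\ INR (length S) >= sqrt (INR (length A)) /\
    forall p, V S p -> u1 * fst p + u2 * snd p <= c.
Proof.
  intros HA (S & HS & H). destruct (large_sublists_spec A S (proj1 HA) HS) as (N & I & L).
  exists S. split; [split; assumption|split; [apply sqrt_le_INR, L|]].
  intros p Vp. apply H. exact (V_vertices A S p HA I Vp).
Qed.

Theorem mainTheorem3 (A1 A2 : list (point -> Prop))
  (H1 : line_set A1) (H2 : line_set A2) :
  exists a b c : R, (a <> 0 \/ b <> 0) /\
  exists A1p A1m A2p A2m : list (point -> Prop),
    sub_line_set A1p A1 /\ sub_line_set A1m A1 /\
    sub_line_set A2p A2 /\ sub_line_set A2m A2 /\
    INR (length A1p) >= sqrt (INR (length A1)) /\
    INR (length A1m) >= sqrt (INR (length A1)) /\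
    INR (length A2p) >= sqrt (INR (length A2)) /\
    INR (length A2m) >= sqrt (INR (length A2)) /\
    (forall p, V A1p p -> halfplane_plus a b c p) /\
    (forall p, V A1m p -> halfplane_minus a b c p) /\
    (forall p, V A2p p -> halfplane_plus a b c p) /\
    (forall p, V A2m p -> halfplane_minus a b c p).
Proof.
  destruct (common_split A1 A2 H1 H2) as (u1 & u2 & c & Hu & [B1m B1p] & [B2m B2p]).
  destruct (large_below_sublist _ _ _ _ H1 B1m) as (S1m & Sub1m & Len1m & V1m).
  destruct (large_below_sublist _ _ _ _ H1 B1p) as (S1p & Sub1p & Len1p & V1p).
  destruct (large_below_sublist _ _ _ _ H2 B2m) as (S2m & Sub2m & Len2m & V2m).
  destruct (large_below_sublist _ _ _ _ H2 B2p) as (S2p & Sub2p & Len2p & V2p).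
  exists u1, u2, c. split.
  { destruct (Req_dec u1 0) as [->|]; [right; intros ->; lra|left; assumption]. }
  exists S1p, S1m, S2p, S2m. do 8 (split; [assumption|]).
  unfold halfplane_plus, halfplane_minus.
  split; [|split; [|split]]; intros p Vp;
    [apply V1p in Vp|apply V1m in Vp|apply V2p in Vp|apply V2m in Vp]; lra.
Qed.
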